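(* Every $2$-dimensional real Banach space has the $\mathbf{L}_{p,p}$-nu.
   Context: For a Banach space $X$: $\Pi(X)=\{(x,x^* )\in S_X\times S_{X^*}: x^*(x)=1\}$; for $T\in\mathcal{L}(X)$ (bounded linear operators on $X$), $v(T)=\sup\{|x^*(Tx)|:(x,x^* )\in\Pi(X)\}$. $X$ has the $\mathbf{L}_{p,p}$-nu if for every $\varepsilon>0$ and $(x,x^* )\in\Pi(X)$ there is $\eta(\varepsilon,(x,x^* ))>0$ such that whenever $T\in\mathcal{L}(X)$ with $v(T)=1$ satisfies $|x^*(Tx)|>1-\eta(\varepsilon,(x,x^* ))$, there is $S\in\mathcal{L}(X)$ with $v(S)=1$, $|x^*(Sx)|=1$ and $\|S-T\|<\varepsilon$. *)

From HB Require Import structures.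
From mathcomp Require Import all_boot all_order all_algebra.
From mathcomp Require Import all_classical all_reals topology normedtype.
Set Implicit Arguments. Unset Strict Implicit. Unset Printing Implicit Defensive.
Import Order.TTheory GRing.Theory Num.Theory.
Import numFieldNormedType.Exports.
Local Open Scope classical_set_scope.
Local Open Scope ring_scope.

Section Defs.
Variables (R : realType) (V : normedModType R).

Definition dim2 : Prop :=
  exists e1 e2 : V, forall x : V,
    exists! ab : R * R, x = ab.1 *: e1 + ab.2 *: e2.

Definition is_functional (f : V -> R) : Prop :=
  (forall (a : R) (x y : V), f (a *: x + y) = a * f x + f y) /\
  (exists C : R, forall x : V, `|f x| <= C * `|x|).

Definition dual_norm (f : V -> R) : R :=
  sup [set `|f x| | x in [set x : V | `|x| <= 1]].

Definition is_operator (T : V -> V) : Prop :=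
  (forall (a : R) (x y : V), T (a *: x + y) = a *: T x + T y) /\
  (exists C : R, forall x : V, `|T x| <= C * `|x|).

Definition op_norm (T : V -> V) : R :=
  sup [set `|T x| | x in [set x : V | `|x| <= 1]].

Definition in_Pi (x : V) (f : V -> R) : Prop :=
  `|x| = 1 /\ is_functional f /\ dual_norm f = 1 /\ f x = 1.

Definition num_radius (T : V -> V) : R :=
  sup [set `|p.2 (T p.1)| | p in [set p : V * (V -> R) | in_Pi p.1 p.2]].

Definition has_Lpp_nu : Prop :=
  forall eps : R, 0 < eps ->
  forall (x : V) (f : V -> R), in_Pi x f ->
  exists eta : R, 0 < eta /\
    forall T : V -> V, is_operator T -> num_radius T = 1 ->
      1 - eta < `|f (T x)| ->
      exists S : V -> V, is_operator S /\ num_radius S = 1 /\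
        `|f (S x)| = 1 /\ op_norm (fun y => S y - T y) < eps.

End Defs.

From mathcomp Require Import all_boot all_order all_algebra.
From mathcomp Require Import all_classical all_reals topology normedtype.
From mathcomp Require Import derive ring.
Set Implicit Arguments. Unset Strict Implicit. Unset Printing Implicit Defensive.
Import Order.TTheory GRing.Theory Num.Theory.
Import numFieldNormedType.Exports.
Local Open Scope classical_set_scope.
Local Open Scope ring_scope.

(* Fix a basis e1, e2 of the space X.  A bounded operator T is determined by
   the four coordinates of T e1 and T e2, so L(X) is identified with R^4
   through the linear map [op].  Under this identification the numerical
   radius becomes a seminorm p on R^4 (it may vanish on nonzero operators),
   a |-> x^*(op a x) becomes a linear form l with |l| <= p, and the operator
   norm becomes a subadditive Lipschitz function N.  The theorem is then an
   instance of an abstract perturbation lemma on R^n: modulo the kernel of p,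
   on which l vanishes, the p-unit sphere is compact; so is the set of its
   points at N-distance at least eps from every point where |l| = p = 1.
   Unless this set is empty, |l| attains on it a maximum m < 1, and
   eta := 1 - m works. *)

Lemma lipschitz_continuous (R : realType) (X : normedModType R)
    (g : X -> R) (L : R) :
  (forall x y, `|g x - g y| <= L * `|x - y|) -> continuous g.
Proof.
move=> gL x; apply/cvgrPdist_lt => e e0.
have L1 : 0 < `|L| + 1 by rewrite ltr_pwDr // normr_ge0.
near=> y.
apply: le_lt_trans (gL x y) _.
apply: (le_lt_trans (ler_wpM2r (normr_ge0 _) (ler_norm L))).
have LL : `|L| <= `|L| + 1 by rewrite lerDl.
apply: (le_lt_trans (ler_wpM2r (normr_ge0 _) LL)).
rewrite -ltr_pdivlMl //.
near: y; apply: (@cvgr_dist_lt _ _ _ _ _ id x (@cvg_id _ _)).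
by rewrite mulr_gt0 // invr_gt0.
Unshelve. all: by end_near.
Qed.

Lemma dist_lipschitz (R : realType) (X : normedModType R) (a x y : X) :
  `| `|a - x| - `|a - y| | <= 1 * `|x - y|.
Proof.
rewrite mul1r; apply: le_trans (ler_dist_dist _ _) _.
by rewrite opprB addrC addrA subrK distrC.
Qed.

Lemma bounded_by (R : realType) n (A : set 'rV[R]_n) (M : R) :
  (forall a, A a -> `|a| <= M) -> bounded_set A.
Proof.
move=> AM; exists M; split; first by rewrite num_real.
by move=> y My a /AM aM /=; exact: le_trans aM (ltW My).
Qed.

Section LevelSets.
Variables (T : topologicalType) (R : realType) (g : T -> R) (c : R).
Hypothesis g_cont : continuous g.

Lemma closed_superlevel : closed [set a | c <= g a].
Proof.
apply: (@preimage_closed _ _ g [set x | c <= x]); last exact: closed_ge.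
by move=> x _; apply: g_cont.
Qed.

Lemma closed_sublevel : closed [set a | g a <= c].
Proof.
apply: (@preimage_closed _ _ g [set x | x <= c]); last exact: closed_le.
by move=> x _; apply: g_cont.
Qed.

Lemma closed_level : closed [set a | g a = c].
Proof.
apply: (@preimage_closed _ _ g [set x | x = c]); last exact: closed_eq.
by move=> x _; apply: g_cont.
Qed.

End LevelSets.

Section DominatedSeminorm.
Variables (R : realType) (n : nat) (p : 'rV[R]_n -> R) (L : R).
Hypothesis pD : forall a b, p (a + b) <= p a + p b.
Hypothesis pZ : forall k a, p (k *: a) = `|k| * p a.
Hypothesis pL : forall a, p a <= L * `|a|.

Lemma seminorm0 : p 0 = 0.
Proof. by rewrite -(scale0r 0) pZ normr0 mul0r. Qed.

Lemma seminormN a : p (- a) = p a.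
Proof. by rewrite -scaleN1r pZ normrN normr1 mul1r. Qed.

Lemma seminorm_ge0 a : 0 <= p a.
Proof.
have := pD a (- a); rewrite subrr seminorm0 seminormN => h.
by rewrite -(@pmulr_rge0 _ 2) // mulr2n mulrDl mul1r.
Qed.

Lemma seminormB a b : p a - p b <= p (a - b).
Proof. by rewrite lerBlDr; have := pD (a - b) b; rewrite subrK. Qed.

Lemma seminorm_continuous : continuous p.
Proof.
apply: (@lipschitz_continuous _ _ _ L) => x y.
rewrite ler_norml; apply/andP; split.
  rewrite lerNl opprB; apply: le_trans (seminormB _ _) _.
  by rewrite distrC; apply: pL.
by apply: le_trans (seminormB _ _) _; apply: pL.
Qed.

Lemma kernel_closed : closed [set z | p z = 0].
Proof. exact: closed_level seminorm_continuous. Qed.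

Lemma kernelD z1 z2 : p z1 = 0 -> p z2 = 0 -> p (z1 + z2) = 0.
Proof.
move=> h1 h2; apply/eqP; rewrite eq_le seminorm_ge0 andbT.
by apply: le_trans (pD _ _) _; rewrite h1 h2 addr0.
Qed.

Lemma kernelZ k z : p z = 0 -> p (k *: z) = 0.
Proof. by move=> h; rewrite pZ h mulr0. Qed.

Lemma seminorm_translate a z : p z = 0 -> p (a - z) = p a.
Proof.
move=> Zz; apply/eqP; rewrite eq_le; apply/andP; split.
  by apply: le_trans (pD _ _) _; rewrite seminormN Zz addr0.
by have := pD (a - z) z; rewrite subrK Zz addr0.
Qed.

(* The distance from a to the kernel is attained (the kernel is closed and
   only its part in a large ball matters). *)
Lemma nearest_kernel_point a : exists za, p za = 0 /\
  forall z, p z = 0 -> `|a - za| <= `|a - z|.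
Proof.
pose A := [set z | p z = 0] `&` [set z | `|z| <= 2 * `|a|].
have A0 : A !=set0.
  by exists 0; split; rewrite /= ?seminorm0 ?normr0 // mulr_ge0 // normr_ge0.
have cA : compact A.
  apply: bounded_closed_compact; first by apply: (@bounded_by _ _ _ (2 * `|a|)) => z [].
  by apply: closedI; [exact: kernel_closed | exact: closed_sublevel norm_continuous].
have dist_cont : continuous (fun z : 'rV[R]_n => `|a - z|).
  exact: (@lipschitz_continuous _ _ _ 1) (dist_lipschitz a).
have [c /set_mem [Zc _] cmin] := EVT_min_rV A0 cA (continuous_subspaceT dist_cont).
exists c; split => // z Zz.
have [zle|zgt] := leP `|z| (2 * `|a|); first by apply: cmin; rewrite inE.
apply: (@le_trans _ _ `|a - 0|).
  by apply: cmin; rewrite inE; split; rewrite /= ?seminorm0 ?normr0 // mulr_ge0.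
rewrite subr0; apply: (@le_trans _ _ (`|z| - `|a|)).
  by rewrite lerBrDr -mulr2n -mulr_natl ltW.
by rewrite distrC lerB_dist.
Qed.

(* The unit vectors at distance at least 1 from the kernel; a minimum of p on
   this compact set yields the constant of kernel_distance_bound. *)
Definition far_unit_vectors : set 'rV[R]_n :=
  [set b | `|b| = 1] `&` \bigcap_(z in [set z | p z = 0]) [set b | 1 <= `|b - z|].

Lemma far_unit_vectors_compact : compact far_unit_vectors.
Proof.
apply: bounded_closed_compact; first by apply: (@bounded_by _ _ _ 1) => b [/= ->].
apply: closedI; first exact: closed_level norm_continuous.
apply: closed_bigI => z _; apply: closed_superlevel.
apply: (@lipschitz_continuous _ _ _ 1) => x y.
by rewrite -(opprB z x) -(opprB z y) !normrN; apply: dist_lipschitz.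
Qed.

Lemma normalized_residual_far a za : p za = 0 ->
    (forall z, p z = 0 -> `|a - za| <= `|a - z|) -> a - za != 0 ->
  far_unit_vectors (`|a - za|^-1 *: (a - za)).
Proof.
move=> Zza zmin r0; have nr0 : 0 < `|a - za| by rewrite normr_gt0.
split; first by rewrite /= normrZV // unitfE gt_eqF.
move=> z Zz /=.
have -> : `|a - za|^-1 *: (a - za) - z =
    `|a - za|^-1 *: (a - (za + `|a - za| *: z)).
  rewrite (scalerBr _ a (za + _)) (scalerDr _ za) scalerA mulVf ?gt_eqF //.
  by rewrite scale1r scalerBr opprD addrA.
rewrite normrZ normfV normr_id ler_pdivlMl // mulr1.
by apply: zmin; apply: kernelD => //; apply: kernelZ.
Qed.

(* p controls the distance to its kernel: the quotient seminorm is a norm on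
   a finite-dimensional space, hence equivalent to the quotient norm. *)
Lemma kernel_distance_bound : exists C, 0 < C /\
  forall a, exists z, p z = 0 /\ `|a - z| <= C * p a.
Proof.
have [[k0 Kk0]|K0] := pselect (far_unit_vectors !=set0); last first.
  exists 1; split => // a; have [za [Zza zmin]] := nearest_kernel_point a.
  exists za; split => //; have [r0|r0] := eqVneq (a - za) 0.
    by rewrite r0 normr0 mul1r seminorm_ge0.
  by exfalso; apply: K0; exists (`|a - za|^-1 *: (a - za)); apply: normalized_residual_far.
have [c /set_mem Kc cmin] := EVT_min_rV (ex_intro _ k0 Kk0)
  far_unit_vectors_compact (continuous_subspaceT seminorm_continuous).
have pc0 : 0 < p c.
  rewrite lt_def seminorm_ge0 andbT; apply/negP => /eqP pc.
  by case: Kc => _ /(_ c pc) /=; rewrite subrr normr0 ler10.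
exists (p c)^-1; split; first by rewrite invr_gt0.
move=> a; have [za [Zza zmin]] := nearest_kernel_point a.
exists za; split => //; have [r0|r0] := eqVneq (a - za) 0.
  by rewrite r0 normr0; apply: mulr_ge0; [rewrite invr_ge0 ltW | exact: seminorm_ge0].
have := cmin _ (mem_set (normalized_residual_far Zza zmin r0)).
rewrite pZ normfV normr_id -(seminorm_translate a Zza) => h.
have nr0 : 0 < `|a - za| by rewrite normr_gt0.
by rewrite ler_pdivlMl // -ler_pdivlMr // mulrC.
Qed.


Variables (l N : 'rV[R]_n -> R).
Hypothesis lD : forall a b, l (a + b) = l a + l b.
Hypothesis lp : forall a, `|l a| <= p a.
Hypothesis ND : forall a b, N (a + b) <= N a + N b.
Hypothesis NL : forall a, N a <= L * `|a|.

Lemma lformB a b : l (a - b) = l a - l b.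
Proof. by apply/eqP; rewrite eq_sym subr_eq -lD subrK. Qed.

(* l vanishes on the kernel of p, so it is invariant under translation by it. *)
Lemma lform_translate a z : p z = 0 -> l (a - z) = l a.
Proof.
move=> Zz; rewrite lformB.
have : `|l z| <= 0 by rewrite -Zz lp.
by rewrite normr_le0 => /eqP ->; rewrite subr0.
Qed.

Lemma lform_continuous : continuous (fun a => `|l a|).
Proof.
apply: (@lipschitz_continuous _ _ _ L) => x y.
apply: le_trans (ler_dist_dist _ _) _.
by rewrite -lformB; apply: le_trans (lp _) (pL _).
Qed.

Lemma N_dist_continuous (s : 'rV[R]_n) : continuous (fun a : 'rV[R]_n => N (s - a)).
Proof.
apply: (@lipschitz_continuous _ _ _ L) => x y.
rewrite ler_norml; apply/andP; split.
  rewrite lerNl opprB lerBlDl.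
  have -> : s - y = (s - x) + (x - y) by rewrite addrA subrK.
  by apply: le_trans (ND _ _) _; rewrite lerD2l NL.
rewrite lerBlDl.
have -> : s - x = (s - y) + (y - x) by rewrite addrA subrK.
by apply: le_trans (ND _ _) _; rewrite lerD2l distrC NL.
Qed.

Definition attaining : set 'rV[R]_n := [set s | p s = 1 /\ `|l s| = 1].

Definition far_points (C eps : R) : set 'rV[R]_n :=
  ([set a | `|a| <= C] `&` [set a | p a = 1]) `&`
  \bigcap_(s in attaining) [set a | eps <= N (s - a)].

Lemma far_points_compact C eps : compact (far_points C eps).
Proof.
apply: bounded_closed_compact; first by apply: (@bounded_by _ _ _ C) => a [[]].
apply: closedI; first apply: closedI.
- exact: closed_sublevel norm_continuous.
- exact: closed_level seminorm_continuous.
apply: closed_bigI => s _; apply: closed_superlevel; exact: N_dist_continuous.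
Qed.

(* A far point is not itself attaining, hence |l| < 1 there. *)
Lemma far_point_lform_lt1 C eps c : 0 < eps -> far_points C eps c -> `|l c| < 1.
Proof.
move=> eps0 [[_ pc1] cF].
rewrite lt_def -pc1 lp andbT; apply/negP => /eqP lc.
have := cF c (conj pc1 (etrans (esym lc) pc1)); rewrite /= subrr.
by apply/negP; rewrite -ltNge; apply: le_lt_trans (NL _) _; rewrite normr0 mulr0.
Qed.

Lemma close_to_attaining C eps a z : p a = 1 -> p z = 0 -> `|a - z| <= C ->
    ~ far_points C eps (a - z) ->
  exists b, p b = 1 /\ `|l b| = 1 /\ N (b - a) < eps.
Proof.
move=> pa1 Zz az notfar.
have : ~ (\bigcap_(s in attaining) [set a | eps <= N (s - a)]) (a - z).
  by move=> H; apply: notfar; split => //; split; rewrite /= ?seminorm_translate.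
move=> /existsNP [s /not_implyP [[ps1 ls1] /negP]]; rewrite -ltNge => hs.
exists (s + z); split; first by rewrite -(seminorm_translate _ Zz) addrK.
split; first by rewrite -(lform_translate _ Zz) addrK.
by move: hs; rewrite opprB addrA.
Qed.

(* Main abstract statement: eta is 1 - max |l| over the far points, or 1 if
   there are none, C being the constant of kernel_distance_bound. *)
Lemma perturbation eps : 0 < eps -> exists eta, 0 < eta /\
  forall a, p a = 1 -> 1 - eta < `|l a| ->
  exists b, p b = 1 /\ `|l b| = 1 /\ N (b - a) < eps.
Proof.
move=> eps0; have [C [C0 HC]] := kernel_distance_bound.
have near_sphere a : p a = 1 -> exists z, p z = 0 /\ `|a - z| <= C.
  by move=> pa1; have [z [Zz az]] := HC a; exists z; rewrite pa1 mulr1 in az.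
have [[b0 Fb0]|F0] := pselect (far_points C eps !=set0); last first.
  exists 1; split => // a pa1 _; have [z [Zz az]] := near_sphere a pa1.
  by apply: (close_to_attaining pa1 Zz az) => Fz; apply: F0; exists (a - z).
have [c /set_mem Fc cmax] := EVT_max_rV (ex_intro _ b0 Fb0)
  (@far_points_compact C eps) (continuous_subspaceT lform_continuous).
exists (1 - `|l c|); split; first by rewrite subr_gt0 (far_point_lform_lt1 eps0 Fc).
move=> a pa1 la; have [z [Zz az]] := near_sphere a pa1.
apply: (close_to_attaining pa1 Zz az) => Fz.
have := cmax _ (mem_set Fz); rewrite lform_translate //.
by apply/negP; rewrite -ltNge; move: la; rewrite opprB addrC subrK.
Qed.

End DominatedSeminorm.

Lemma entry_le_norm (R : realType) n (a : 'rV[R]_n) i : `|a ord0 i| <= `|a|.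
Proof.
have /mapP[j Hj ->] : `|a ord0 i| \in [seq `|a x.1 x.2| | x : 'I_1 * 'I_n].
  by apply/mapP; exists (ord0, i) => //=; rewrite mem_enum.
by rewrite [leRHS]/Num.norm /= mx_normrE; apply/bigmax_geP; right => /=; exists j.
Qed.

Section NormedSpace.
Variables (R : realType) (V : normedModType R).

Lemma line_distance_attained (u w : V) :
  exists t0 : R, forall t, `|t0 *: u + w| <= `|t *: u + w|.
Proof.
pose g t := `|t *: u + w|.
have gc : continuous g.
  apply: (@lipschitz_continuous _ _ _ `|u|) => x y.
  apply: le_trans (ler_dist_dist _ _) _.
  have -> : x *: u + w - (y *: u + w) = (x - y) *: u.
    by rewrite scalerBl opprD addrACA subrr addr0.
  by rewrite normrZ mulrC.
pose M := 2 * `|w| / `|u|.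
have M0 : 0 <= M by rewrite /M mulr_ge0 // ?invr_ge0 ?mulr_ge0.
have MM : - M <= M by rewrite lerNl (le_trans _ M0) // oppr_le0.
have [t0 _ t0min] := EVT_min MM (continuous_subspaceT gc).
exists t0 => t; have [tM|tM] := leP `|t| M.
  by apply: t0min; rewrite in_itv /= -ler_norml.
have z0 : 0 \in `[- M, M] by rewrite in_itv /= oppr_le0 M0.
apply: le_trans (t0min 0 z0) _; rewrite /g scale0r add0r.
have [->|u0] := eqVneq u 0; first by rewrite scaler0 add0r.
have nu0 : 0 < `|u| by rewrite normr_gt0.
have h : 2 * `|w| < `|t| * `|u| by rewrite -ltr_pdivrMr.
apply: le_trans (lerB_normD (t *: u) w); rewrite normrZ.
apply: ltW; rewrite ltrBrDr; apply: le_lt_trans h.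
by rewrite mulr2n mulrDl mul1r.
Qed.

Lemma independent_coef_bound (u w : V) :
  (forall a b : R, a *: u + b *: w = 0 -> b = 0) ->
  exists d, 0 < d /\ forall a b : R, d * `|b| <= `|a *: u + b *: w|.
Proof.
move=> ind; have [t0 t0min] := line_distance_attained u w.
exists `|t0 *: u + w|; split.
  rewrite normr_gt0; apply/negP => /eqP h.
  have : (1 : R) = 0 by apply: (ind t0); rewrite scale1r.
  by move/eqP; rewrite oner_eq0.
move=> a b; have [->|b0] := eqVneq b 0; first by rewrite normr0 mulr0.
have -> : a *: u + b *: w = b *: ((a / b) *: u + w).
  by rewrite scalerDr scalerA mulrCA mulfV // mulr1.
by rewrite normrZ mulrC ler_pM2l ?normr_gt0.
Qed.

Lemma functional0 (g : V -> R) : is_functional g -> g 0 = 0.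
Proof.
move=> [gL _]; have h := gL 1 0 0; rewrite scaler0 addr0 mul1r in h.
by have := congr1 (fun v => v - g 0) h; rewrite /= subrr addrK.
Qed.

Lemma functionalZ (g : V -> R) k z : is_functional g -> g (k *: z) = k * g z.
Proof. by move=> gf; have := gf.1 k z 0; rewrite addr0 (functional0 gf) addr0. Qed.

Lemma functionalD (g : V -> R) z z' : is_functional g -> g (z + z') = g z + g z'.
Proof. by move=> gf; have := gf.1 1 z z'; rewrite scale1r mul1r. Qed.

Lemma dominated_unit_ball {W : normedModType R} (h : V -> W) (B : R) :
  (forall y, `|h y| <= B * `|y|) ->
  has_ubound [set `|h y| | y in [set y : V | `|y| <= 1]].
Proof.
move=> hB; exists `|B| => _ [y y1 <-].
apply: le_trans (hB y) _; apply: le_trans (ler_wpM2r (normr_ge0 _) (ler_norm B)) _.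
by rewrite -{2}(mulr1 `|B|) ler_wpM2l.
Qed.

Lemma dual_norm1_le (g : V -> R) : is_functional g -> dual_norm g = 1 ->
  forall z, `|g z| <= `|z|.
Proof.
move=> gf gn.
have ball1 (z : V) : `|z| <= 1 -> `|g z| <= 1.
  move=> z1; rewrite -gn; apply: ub_le_sup; last by exists z.
  have [C HC] := gf.2; exact: dominated_unit_ball HC.
move=> z; have [->|z0] := eqVneq z 0; first by rewrite (functional0 gf) !normr0.
have nz : 0 < `|z| by rewrite normr_gt0.
have hz : z = `|z| *: (`|z|^-1 *: z) by rewrite scalerA mulfV ?gt_eqF // scale1r.
rewrite {1}hz (functionalZ _ _ gf) normrM normr_id -[leRHS]mulr1 ler_pM2l //.
by apply: ball1; rewrite normrZ normfV normr_id mulVf ?gt_eqF.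
Qed.

Lemma Pi_le (T : V -> V) y g : in_Pi y g -> `|g (T y)| <= `|T y|.
Proof. by move=> [_ [gf [gn _]]]; apply: dual_norm1_le. Qed.

Lemma num_radius_ub (T : V -> V) B y g : (forall z, `|T z| <= B * `|z|) ->
  in_Pi y g -> `|g (T y)| <= num_radius T.
Proof.
move=> TB Pyg; apply: ub_le_sup; last by exists (y, g).
exists B => _ [[z h] Pzh <-] /=.
apply: le_trans (Pi_le T Pzh) _; apply: le_trans (TB z) _.
by case: Pzh => -> _; rewrite mulr1.
Qed.

(* v(T) <= M when M bounds |x^*(T x)| on Pi(X); the element (x0, f0) of Pi(X)
   makes the supremum range over a nonempty set. *)
Lemma num_radius_le (T : V -> V) M (x0 : V) (f0 : V -> R) : in_Pi x0 f0 ->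
  (forall y g, in_Pi y g -> `|g (T y)| <= M) -> num_radius T <= M.
Proof.
move=> P0 H; apply: ge_sup; first by exists `|f0 (T x0)|, (x0, f0).
by move=> _ [[z h] Pzh <-] /=; apply: H.
Qed.

Lemma op_norm_ub (T : V -> V) B y : (forall z, `|T z| <= B * `|z|) ->
  `|y| <= 1 -> `|T y| <= op_norm T.
Proof.
by move=> TB y1; apply: ub_le_sup; [exact: dominated_unit_ball TB | exists y].
Qed.

Lemma op_norm_le (T : V -> V) M : (forall y, `|y| <= 1 -> `|T y| <= M) ->
  op_norm T <= M.
Proof.
move=> H; apply: ge_sup; first by exists `|T 0|, 0; rewrite /= ?normr0.
by move=> _ [z z1 <-]; apply: H.
Qed.

End NormedSpace.

Definition i0 : 'I_4 := @Ordinal 4 0 isT.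
Definition i1 : 'I_4 := @Ordinal 4 1 isT.
Definition i2 : 'I_4 := @Ordinal 4 2 isT.
Definition i3 : 'I_4 := @Ordinal 4 3 isT.

Section TwoDimensional.
Variables (R : realType) (V : normedModType R) (e1 e2 : V) (co : V -> R * R).
Hypothesis co_spec : forall x, x = (co x).1 *: e1 + (co x).2 *: e2.
Hypothesis co_uniq : forall x (ab : R * R), x = ab.1 *: e1 + ab.2 *: e2 -> co x = ab.

Definition coord1 x := (co x).1.
Definition coord2 x := (co x).2.

Lemma co_linear k x y :
  co (k *: x + y) = (k * coord1 x + coord1 y, k * coord2 x + coord2 y).
Proof.
apply: co_uniq => /=; rewrite {1}(co_spec x) {1}(co_spec y).
by rewrite scalerDr !scalerA addrACA -!scalerDl.
Qed.

Lemma coord1_linear k x y : coord1 (k *: x + y) = k * coord1 x + coord1 y.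
Proof. by rewrite {1}/coord1 co_linear. Qed.

Lemma coord2_linear k x y : coord2 (k *: x + y) = k * coord2 x + coord2 y.
Proof. by rewrite {1}/coord2 co_linear. Qed.

Lemma basis_independent a b : a *: e1 + b *: e2 = 0 -> a = 0 /\ b = 0.
Proof.
move=> h; have := @co_uniq 0 (0, 0); rewrite /= !scale0r addr0 => /(_ erefl).
by rewrite (@co_uniq 0 (a, b) (esym h)) => -[].
Qed.

Lemma coord_bounded : exists K, 0 < K /\
  forall x, `|coord1 x| <= K * `|x| /\ `|coord2 x| <= K * `|x|.
Proof.
have [d2 [d20 H2]] := @independent_coef_bound _ _ e1 e2
  (fun a b h => (basis_independent h).2).
have [d1 [d10 H1]] := @independent_coef_bound _ _ e2 e1
  (fun a b h => (@basis_independent b a (etrans (addrC _ _) h)).1).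
exists (d1^-1 + d2^-1); split; first by rewrite addr_gt0 // invr_gt0.
move=> x; split.
  apply: (@le_trans _ _ (d1^-1 * `|x|)); last first.
    by rewrite ler_wpM2r // lerDl invr_ge0 ltW.
  rewrite ler_pdivlMl // {2}(co_spec x) addrC; exact: H1.
apply: (@le_trans _ _ (d2^-1 * `|x|)); last first.
  by rewrite ler_wpM2r // lerDr invr_ge0 ltW.
rewrite ler_pdivlMl // {2}(co_spec x); exact: H2.
Qed.

Variables (K : R) (K0 : 0 < K).
Hypothesis coord_le : forall x, `|coord1 x| <= K * `|x| /\ `|coord2 x| <= K * `|x|.

Definition op (m : 'rV[R]_4) (y : V) : V :=
  (coord1 y * m ord0 i0 + coord2 y * m ord0 i2) *: e1 +
  (coord1 y * m ord0 i1 + coord2 y * m ord0 i3) *: e2.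

Lemma opD a b y : op (a + b) y = op a y + op b y.
Proof.
rewrite /op !mxE addrACA -!scalerDl.
by congr (_ *: _ + _ *: _); ring.
Qed.

Lemma opZ k a y : op (k *: a) y = k *: op a y.
Proof.
rewrite /op !mxE scalerDr !scalerA.
by congr (_ *: _ + _ *: _); ring.
Qed.

Lemma opB a b y : op (b - a) y = op b y - op a y.
Proof. by rewrite opD; congr (_ + _); rewrite -scaleN1r opZ scaleN1r. Qed.

Lemma op_linear a k y y' : op a (k *: y + y') = k *: op a y + op a y'.
Proof.
rewrite /op coord1_linear coord2_linear scalerDr !scalerA addrACA -!scalerDl.
by congr (_ *: _ + _ *: _); ring.
Qed.

Definition op_bound := 2 * K * (`|e1| + `|e2|).

Lemma op_bound_ge0 : 0 <= op_bound.
Proof. by rewrite /op_bound !mulr_ge0 ?addr_ge0 // ltW. Qed.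

Lemma op_coef_bound (a : 'rV[R]_4) y (i j : 'I_4) :
  `|coord1 y * a ord0 i + coord2 y * a ord0 j| <= 2 * K * `|a| * `|y|.
Proof.
have [h1 h2] := coord_le y; have k0 := ltW K0.
apply: le_trans (ler_normD _ _) _; rewrite !normrM.
have -> : 2 * K * `|a| * `|y| = K * `|y| * `|a| + K * `|y| * `|a| by ring.
by apply: lerD; apply: ler_pM; rewrite ?normr_ge0 ?entry_le_norm.
Qed.

Lemma op_le a y : `|op a y| <= op_bound * `|a| * `|y|.
Proof.
rewrite /op; apply: le_trans (ler_normD _ _) _; rewrite !normrZ.
have -> : op_bound * `|a| * `|y| =
   2 * K * `|a| * `|y| * `|e1| + 2 * K * `|a| * `|y| * `|e2|.
  by rewrite /op_bound; ring.
by apply: lerD; apply: ler_wpM2r; rewrite ?normr_ge0 ?op_coef_bound.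
Qed.

Lemma op_operator a : is_operator (op a).
Proof.
split; first by move=> k y y'; exact: op_linear.
by exists (op_bound * `|a|) => y; exact: op_le.
Qed.

Definition matrix_of (T : V -> V) : 'rV[R]_4 :=
  \row_(j < 4) nth 0 [:: coord1 (T e1); coord2 (T e1); coord1 (T e2); coord2 (T e2)] j.

Lemma op_matrix_of T : is_operator T -> op (matrix_of T) = T.
Proof.
move=> [TL _]; apply: funext => y.
have T0 : T 0 = 0.
  have h := TL 1 0 0; rewrite scaler0 addr0 scale1r in h.
  by have := congr1 (fun v => v - T 0) h; rewrite /= subrr addrK.
have TZ k z : T (k *: z) = k *: T z by have := TL k z 0; rewrite addr0 T0 addr0.
have -> : T y = coord1 y *: T e1 + coord2 y *: T e2 by rewrite {1}(co_spec y) TL TZ.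
rewrite {1}(co_spec (T e1)) {1}(co_spec (T e2)) /op !mxE /=.
rewrite !scalerDr !scalerA addrACA -!scalerDl.
by congr (_ *: _ + _ *: _); rewrite /coord1 /coord2; ring.
Qed.

Variables (x0 : V) (f0 : V -> R).
Hypothesis x0f0_Pi : in_Pi x0 f0.

Definition nrad (a : 'rV[R]_4) := num_radius (op a).
Definition eval_Pi (a : 'rV[R]_4) := f0 (op a x0).
Definition opnorm (a : 'rV[R]_4) := op_norm (op a).

Lemma nrad_ub a y g : in_Pi y g -> `|g (op a y)| <= nrad a.
Proof. by apply: num_radius_ub; apply: op_le. Qed.

Lemma nradD a b : nrad (a + b) <= nrad a + nrad b.
Proof.
apply: (num_radius_le x0f0_Pi) => y g Pyg.
rewrite opD (functionalD _ _ Pyg.2.1); apply: le_trans (ler_normD _ _) _.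
by apply: lerD; apply: nrad_ub.
Qed.

Lemma nradZ k a : nrad (k *: a) = `|k| * nrad a.
Proof.
have nradZ_le k' a' : nrad (k' *: a') <= `|k'| * nrad a'.
  apply: (num_radius_le x0f0_Pi) => y g Pyg.
  by rewrite opZ (functionalZ _ _ Pyg.2.1) normrM ler_wpM2l ?nrad_ub.
apply/eqP; rewrite eq_le nradZ_le /=.
have [->|k0] := eqVneq k 0.
  by rewrite normr0 mul0r (le_trans (normr_ge0 _) (nrad_ub _ x0f0_Pi)).
have := nradZ_le k^-1 (k *: a); rewrite scalerA mulVf // scale1r normfV.
by rewrite ler_pdivlMl ?normr_gt0.
Qed.

Lemma nrad_le a : nrad a <= op_bound * `|a|.
Proof.
apply: (num_radius_le x0f0_Pi) => y g Pyg.
apply: le_trans (Pi_le _ Pyg) _; apply: le_trans (op_le a y) _.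
by case: Pyg => -> _; rewrite mulr1.
Qed.

Lemma eval_PiD a b : eval_Pi (a + b) = eval_Pi a + eval_Pi b.
Proof. by rewrite /eval_Pi opD (functionalD _ _ x0f0_Pi.2.1). Qed.

Lemma eval_Pi_le a : `|eval_Pi a| <= nrad a.
Proof. exact: nrad_ub. Qed.

Lemma opnormD a b : opnorm (a + b) <= opnorm a + opnorm b.
Proof.
apply: op_norm_le => y y1; rewrite opD; apply: le_trans (ler_normD _ _) _.
by apply: lerD; apply: op_norm_ub y1; apply: op_le.
Qed.

Lemma opnorm_le a : opnorm a <= op_bound * `|a|.
Proof.
apply: op_norm_le => y y1; apply: le_trans (op_le a y) _.
by rewrite -[leRHS]mulr1 ler_wpM2l // mulr_ge0 ?op_bound_ge0.
Qed.

Lemma Lpp_nu_at eps : 0 < eps -> exists eta, 0 < eta /\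
  forall T, is_operator T -> num_radius T = 1 -> 1 - eta < `|f0 (T x0)| ->
  exists S, is_operator S /\ num_radius S = 1 /\ `|f0 (S x0)| = 1 /\
    op_norm (fun y => S y - T y) < eps.
Proof.
move=> eps0; have [eta [eta0 close]] := perturbation nradD nradZ nrad_le
  eval_PiD eval_Pi_le opnormD opnorm_le eps0.
exists eta; split => // T T_op vT Tx0; have opT := op_matrix_of T_op.
have nradT : nrad (matrix_of T) = 1 by rewrite /nrad opT.
have evalT : 1 - eta < `|eval_Pi (matrix_of T)| by rewrite /eval_Pi opT.
have [b [nrad_b [eval_b dist_b]]] := close (matrix_of T) nradT evalT.
exists (op b); split; first exact: op_operator.
split => //; split => //.
have -> : (fun y => op b y - T y) = op (b - matrix_of T).
  by apply: funext => y; rewrite opB opT.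
exact: dist_b.
Qed.

End TwoDimensional.

Theorem mainTheorem9 (R : realType) (V : normedModType R) :
  dim2 V -> has_Lpp_nu V.
Proof.
move=> [e1 [e2 basis]] eps eps0 x0 f0 x0f0_Pi.
have [co co_ok] := choice basis.
have co_spec x : x = (co x).1 *: e1 + (co x).2 *: e2 by case: (co_ok x).
have co_uniq x (ab : R * R) : x = ab.1 *: e1 + ab.2 *: e2 -> co x = ab.
  by case: (co_ok x) => _; apply.
have [K [K0 coord_le]] := coord_bounded co_spec co_uniq.
exact: (Lpp_nu_at co_spec co_uniq K0 coord_le x0f0_Pi eps0).
Qed.
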